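(* In the setting described in the context (the run $\Omega$ generated by the counterstrategy $\mathcal{E}$), every politeral unit has at most one opposite politeral unit.
   Context: Formulas are built from atoms by $\neg$ (on atoms only), binary $\wedge,\vee$ and unary $!$ (branching recurrence) and $?$ (branching corecurrence). Units. Fix a formula $\mathbb{F}_0$. Oformulas are occurrences of subformulas of $\mathbb{F}_0$. Politerals are occurrences of literals $P$ or $\neg P$ not in the scope of $\neg$. The modal depth of an oformula is the number of its proper superoccurrences of the form $!E$ or $?E$. A unit is $E[\vec x]$, with $E$ an oformula and $\vec x$ a tuple of infinite bitstrings of length equal to the modal depth of $E$. Parenthood: $G_i[\vec x]$ ($i=0,1$) are the children of $(G_0\wedge G_1)[\vec x]$ and of $(G_0\vee G_1)[\vec x]$; the units $G[\vec x,y]$ for all infinite bitstrings $y$ are the children of $!G[\vec x]$ and of $?G[\vec x]$. The $\mathbb{F}_0$-origin $\tilde E$ of $E[\vec x]$ is $E$. A politeral unit is one whose origin is a politeral. Funits. A funit is $E[\vec w]$ with $\vec w$ a tuple of finite bitstrings of length equal to the modal depth of $E$. Funits have the analogous parenthood relation, with children $G[\vec w,u]$ for finite bitstrings $u$. Addresses: the address of $\mathbb{F}_0[\,]$ is the empty string; if $\alpha$ is the address of $E[\vec w]$, then $G_i[\vec w]$ has address $\alpha i.$ (the bit $i$ followed by a period), and $G[\vec w,u]$ has address $\alpha u.$. A funit $E[w_1,\dots,w_n]$ is a funital restriction of the unit $E[x_1,\dots,x_n]$ iff each $w_j$ is a prefix of $x_j$. Its height is $\max_j|w_j|$ (or $0$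 if $n=0$), and it is regular iff all $w_j$ have the same length. Making the numeric move $a$ (a decimal numeral) in a politeral funit with address $\alpha$ means making the move $\alpha a$. A move made in a funit counts as made in every unital extension of it. Runs and projections. For a run $\Theta$ (a sequence of labmoves $\wp\beta$, $\wp\in\{\top,\bot\}$) and a string $\alpha$, $\Theta^\alpha$ keeps the labmoves whose move begins with $\alpha$ and deletes that prefix. For an infinite bitstring $y$, $\Theta^{\preceq y}$ keeps the labmoves $\wp\,u.\beta$ with $u$ a finite prefix of $y$ and deletes ''$u.$''. The projection of a run $\Omega$ on $\mathbb{F}_0[\,]$ is $\Omega$. If $\Theta$ is the projection on $E[\vec x]$, then the projection on the child $G_i[\vec x]$ of a $\wedge$/$\vee$-unit is $\Theta^{i.}$, and on the child $G[\vec x,y]$ of a $!$/$?$-unit it is $\Theta^{\preceq y}$. The run $\Omega$. For a position $\Phi$, a funit is $\Phi$-active iff $\Phi$ contains some move (by either player) of the form $\alpha\beta$ with $\alpha$ its address. A $\Phi$-prompt is a regular politeral funit $L[\vec w]$ such that either $\vec w$ is empty, or its height equals the least integer exceeding the heights of all $\Phi$-active funits. $\Omega$ is an infinite run produced by a play proceeding in rounds $1,2,3,\dots$. At the start of each round, with $\Phi$ the current position, player $\bot$ (the counterstrategy $\mathcal{E}$) lists all $\Phi$-prompts $L_1[\vec w_1],\dots,L_n[\vec w_n]$ in lexicographic order. Then, for $i=1,\dots,n$ in turn, $\bot$ makes the numeric move $a$ in $L_i[\vec w_i]$, where $a$ is the least natural number not yet made as a numeric move in any politeral funit by either player. After this,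 the adversary $\top$ (an arbitrary HPM) makes at most one move. It is assumed that $\Omega$ is legal: every move in it, by either player, has the form $\alpha a$ with $\alpha$ the address of a politeral funit and $a$ a decimal numeral. Opposite. Politeral units $L,M$ are opposite iff $\tilde L,\tilde M$ are literals one of which is the negation of the other and, for each $\wp\in\{\top,\bot\}$, the set of $\wp$-labeled moves in the projection of $\Omega$ on $L$ equals the set of $\neg\wp$-labeled moves in the projection of $\Omega$ on $M$. *)

From mathcomp Require Import all_boot.
Set Implicit Arguments. Unset Strict Implicit. Unset Printing Implicit Defensive.

(* Negation is applied to atoms only, so literals are leaves:
   [Lit true P] is the literal P, [Lit false P] is the literal ~P.
   Atoms are indexed by nat. *)
Inductive fml : Type :=
| Lit of bool & nat
| And of fml & fml
| Or of fml & fml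
| Bang of fml
| Ques of fml.

(* ---------- Oformulas = occurrences of subformulas of F0 ----------
   An occurrence is a path from the root of F0: at a binary node the step
   is 0 or 1 (which conjunct/disjunct), at a unary node (!/?) the step is 0. *)
Fixpoint sub (F : fml) (p : seq nat) : option fml :=
  match p with
  | [::] => Some F
  | i :: p' =>
    match F with
    | And G0 G1 | Or G0 G1 =>
        if i == 0 then sub G0 p' else if i == 1 then sub G1 p' else None
    | Bang G | Ques G => if i == 0 then sub G p' else None
    | Lit _ _ => None
    end
  end.

Definition is_occ (F : fml) (p : seq nat) : Prop := sub F p <> None.

Definition is_politeral (F : fml) (p : seq nat) : Prop :=
  exists b P, sub F p = Some (Lit b P).

Fixpoint mdepth (F : fml) (p : seq nat) : nat :=
  match p with
  | [::] => 0
  | i :: p' =>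
    match F with
    | And G0 G1 | Or G0 G1 => mdepth (if i == 0 then G0 else G1) p'
    | Bang G | Ques G => (mdepth G p').+1
    | Lit _ _ => 0
    end
  end.

(* ---------- Moves ----------
   A move is a string over the alphabet {0,...,9, '.'}; we code the decimal
   digit d by the natural number d and the period '.' by 10.  Bits 0/1 are
   the digits 0/1. *)
Definition dot : nat := 10.
Definition move := seq nat.
Definition labmove := (bool * move)%type.
Definition top := true.
Definition bot := false.

Definition bits (w : seq bool) : seq nat := map nat_of_bool w.

Definition is_numeral (a : move) : bool := (a != [::]) && all (fun d => d < 10) a.
Definition numval (a : move) : nat := foldl (fun acc d => acc * 10 + d) 0 a.
Fixpoint digs (fuel n : nat) : seq nat :=
  match fuel with
  | 0 => [::]
  | f.+1 => if n < 10 then [:: n] else rcons (digs f (n %/ 10)) (n %% 10)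
  end.
Definition dec (n : nat) : move := digs n.+1 n.

(* ---------- Funits and addresses ----------
   A funit E[w1..wn] is represented by the path p of E and the tuple ws. *)
Definition funit := (seq nat * seq (seq bool))%type.

Fixpoint addr (F : fml) (p : seq nat) (ws : seq (seq bool)) : move :=
  match p with
  | [::] => [::]
  | i :: p' =>
    match F with
    | And G0 G1 | Or G0 G1 => i :: dot :: addr (if i == 0 then G0 else G1) p' ws
    | Bang G | Ques G =>
        match ws with
        | w :: ws' => bits w ++ dot :: addr G p' ws'
        | [::] => [::]
        end
    | Lit _ _ => [::]
    end
  end.

Definition faddr (F : fml) (f : funit) : move := addr F f.1 f.2.

Definition is_funit (F : fml) (f : funit) : Prop :=
  is_occ F f.1 /\ size f.2 = mdepth F f.1.

Definition is_politeral_funit (F : fml) (f : funit) : Prop :=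
  is_funit F f /\ is_politeral F f.1.

Definition height (ws : seq (seq bool)) : nat := foldr maxn 0 (map size ws).

Definition regular (ws : seq (seq bool)) : bool :=
  all (fun w => size w == size (head [::] ws)) ws.

Definition position := seq labmove.

Definition active (F : fml) (Phi : position) (f : funit) : Prop :=
  is_funit F f /\ exists lm, lm \in Phi /\ prefix (faddr F f) lm.2.

Definition least_exceeding (F : fml) (Phi : position) (h : nat) : Prop :=
  (forall f, active F Phi f -> height f.2 < h) /\
  (forall h', (forall f, active F Phi f -> height f.2 < h') -> h <= h').

Definition prompt (F : fml) (Phi : position) (f : funit) : Prop :=
  is_politeral_funit F f /\ regular f.2 /\
  (f.2 = [::] \/ least_exceeding F Phi (height f.2)).

Fixpoint lexlt (s t : seq nat) : bool :=
  match s, t with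
  | [::], [::] => false
  | [::], _ :: _ => true
  | _ :: _, [::] => false
  | a :: s', b :: t' => (a < b) || ((a == b) && lexlt s' t')
  end.

Definition made (F : fml) (Phi : position) (n : nat) : Prop :=
  exists lm f a, lm \in Phi /\ is_politeral_funit F f /\
    lm.2 = faddr F f ++ a /\ is_numeral a /\ numval a = n.

Definition least_unmade (F : fml) (Phi : position) (a : nat) : Prop :=
  ~ made F Phi a /\ forall m, m < a -> made F Phi m.

Fixpoint bot_moves (F : fml) (Phi : position) (s : seq funit)
  (B : seq labmove) : Prop :=
  match s with
  | [::] => B = [::]
  | f :: s' => exists a B',
      least_unmade F Phi a /\
      B = (bot, faddr F f ++ dec a) :: B' /\
      bot_moves F (rcons Phi (bot, faddr F f ++ dec a)) s' B'
  end.

Definition round (F : fml) (Phi Phi' : position) : Prop :=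
  exists (s : seq funit) (B T : seq labmove),
    sorted (fun f g => lexlt (faddr F f) (faddr F g)) s /\
    (forall f, f \in s <-> prompt F Phi f) /\
    bot_moves F Phi s B /\
    size T <= 1 /\ all (fun lm => lm.1 == top) T /\
    Phi' = Phi ++ B ++ T.

(* The run Omega is given by the increasing sequence of its positions at the
   starts of rounds 1,2,3,... (pos 0 = empty position). *)
Definition generated (F : fml) (pos : nat -> position) : Prop :=
  pos 0 = [::] /\ forall k, round F (pos k) (pos k.+1).

Definition in_run (pos : nat -> position) (lm : labmove) : Prop :=
  exists k, lm \in pos k.

Definition legal (F : fml) (pos : nat -> position) : Prop :=
  forall lm, in_run pos lm ->
    exists f a, is_politeral_funit F f /\ lm.2 = faddr F f ++ a /\ is_numeral a.

(* ---------- Units and projections ----------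
   A unit E[x1..xn] is represented by the path p of E and xs, infinite
   bitstrings being functions nat -> bool. *)
Definition bitstring := nat -> bool.

Definition is_unit (F : fml) (p : seq nat) (xs : seq bitstring) : Prop :=
  is_occ F p /\ size xs = mdepth F p.

Definition is_politeral_unit (F : fml) (p : seq nat) (xs : seq bitstring) : Prop :=
  is_unit F p xs /\ is_politeral F p.

Definition pref (y : bitstring) (n : nat) : move := [seq nat_of_bool (y i) | i <- iota 0 n].

(* Per-move projection: proj F p xs m = Some beta iff the move m survives
   the successive operations Theta^{i.} / Theta^{<= y} along the path to
   the unit, and then becomes beta. *)
Fixpoint proj (F : fml) (p : seq nat) (xs : seq bitstring) (m : move) : option move :=
  match p with
  | [::] => Some m
  | i :: p' =>
    match F with
    | And G0 G1 | Or G0 G1 =>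
        if prefix [:: i; dot] m then proj (if i == 0 then G0 else G1) p' xs (drop 2 m)
        else None
    | Bang G | Ques G =>
        match xs with
        | y :: xs' =>
            let u := take (index dot m) m in
            if (dot \in m) && (u == pref y (size u))
            then proj G p' xs' (drop (size u).+1 m) else None
        | [::] => None
        end
    | Lit _ _ => None
    end
  end.

Definition in_proj (F : fml) (pos : nat -> position) (p : seq nat)
  (xs : seq bitstring) (wp : bool) (beta : move) : Prop :=
  exists m, in_run pos (wp, m) /\ proj F p xs m = Some beta.

Definition opposite (F : fml) (pos : nat -> position)
  (pL : seq nat) (xL : seq bitstring) (pM : seq nat) (xM : seq bitstring) : Prop :=
  is_politeral_unit F pL xL /\ is_politeral_unit F pM xM /\
  (exists b P, sub F pL = Some (Lit b P) /\ sub F pM = Some (Lit (~~ b) P)) /\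
  (forall (wp : bool) (beta : move),
      in_proj F pos pL xL wp beta <-> in_proj F pos pM xM (~~ wp) beta).

From Stdlib Require Import Setoid Classical Wf_nat FunctionalExtensionality.
From mathcomp Require Import all_boot.
Set Implicit Arguments. Unset Strict Implicit.

(* Let M1 = E1[x1] and M2 = E2[x2] both be opposite to L.  At every
   round k, for n the least integer exceeding the heights of the active
   funits, the regular funital restriction E1[x1|n] of M1 (each bitstring cut
   to length n) is a prompt, so bottom answers it with a numeric move [a] at
   an address of E1[x1|n].  That move projects to the bottom move [a] in M1,
   hence to a top move [a] in L, hence to a bottom move [a] in M2.  But
   bottom never repeats a numeral, so the two bottom moves coincide; parsing
   the address of that single move on M2 gives E1 = E2 and x2|n = x1|n.
   Since n grows at least as fast as the round number, x1 = x2. *)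

Lemma digs_spec f n : n < f ->
  [/\ all (fun d => d < 10) (digs f n), digs f n != [::] & numval (digs f n) = n].
Proof.
elim: f n => [|f IH] n //= lt_nf.
case: ifP => [small|/negbT]; first by rewrite /= small.
rewrite -leqNgt => big.
have lt_qf : n %/ 10 < f.
  by rewrite -ltnS (leq_trans _ lt_nf) // ltnS ltn_Pdiv // (leq_trans _ big).
have [digits nonempty value] := IH _ lt_qf.
split; first by rewrite all_rcons ltn_mod digits.
  by rewrite -size_eq0 size_rcons.
by rewrite /numval foldl_rcons -/(numval _) value -divn_eq.
Qed.

Lemma dec_numeral n : is_numeral (dec n).
Proof. by have [digits nonempty _] := digs_spec (ltnSn n); rewrite /is_numeral nonempty digits. Qed.

Lemma dec_val n : numval (dec n) = n.
Proof. by have [_ _ value] := digs_spec (ltnSn n). Qed.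

Lemma dec_inj : injective dec.
Proof. by move=> m n eq_mn; rewrite -(dec_val m) eq_mn dec_val. Qed.

(* A numeral contains no period, so it never looks like part of an address. *)
Lemma dot_notin_dec n : dot \notin dec n.
Proof.
have [digits _ _] := digs_spec (ltnSn n).
by apply/negP => /(allP digits).
Qed.

Lemma dot_notin_bits w : dot \notin bits w.
Proof. by apply/negP => /mapP [b _]; case: b. Qed.

Lemma size_bits w : size (bits w) = size w.
Proof. exact: size_map. Qed.

Fixpoint restricts (ws : seq (seq bool)) (xs : seq bitstring) : Prop :=
  match ws, xs with
  | [::], [::] => True
  | w :: ws', x :: xs' => bits w = pref x (size w) /\ restricts ws' xs'
  | _, _ => False
  end.

Lemma restricts_size ws xs : restricts ws xs -> size ws = size xs.
Proof. by elim: ws xs => [|w ws IH] [|x xs] //= [_ /IH ->]. Qed.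

Lemma proj_modal_addr F G p q xs ws y w a : F = Bang G \/ F = Ques G ->
  proj F (0 :: p) (y :: xs) (addr F (0 :: q) (w :: ws) ++ a)
  = if bits w == pref y (size w) then proj G p xs (addr G q ws ++ a) else None.
Proof.
move=> modal; set rest := addr G q ws ++ a.
have idx : index dot (bits w ++ dot :: rest) = size w.
  by rewrite index_cat (negbTE (dot_notin_bits w)) /= addn0 size_bits.
have take_w : take (size w) (bits w ++ dot :: rest) = bits w.
  by rewrite -(size_bits w) take_size_cat.
have drop_w : drop (size w).+1 (bits w ++ dot :: rest) = rest.
  by rewrite -addn1 addnC -drop_drop -(size_bits w) drop_size_cat //= drop0.
have -> : addr F (0 :: q) (w :: ws) ++ a = bits w ++ dot :: rest.
  by case: modal => ->; rewrite /= -catA.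
by case: modal => ->; rewrite /= idx take_w mem_cat mem_head orbT /= size_bits drop_w.
Qed.

Lemma proj_addr F p xs q ws a beta :
  is_politeral F p -> size xs = mdepth F p ->
  is_politeral F q -> size ws = mdepth F q -> dot \notin a ->
  (proj F p xs (addr F q ws ++ a) = Some beta <-> [/\ q = p, restricts ws xs & beta = a]).
Proof.
elim: p F xs q ws => [|i p IH] F xs q ws [b [P litp]] size_xs [b' [P' litq]] size_ws dot_a.
  case: F litp size_xs litq size_ws => //= b0 P0 _ size_xs.
  case: q => [|j q] //= _ size_ws.
  case: xs size_xs => // _; case: ws size_ws => // _ /=.
  by split; [case=> ->|case=> _ _ ->].
have IH' G q' xs' ws' : sub G p = Some (Lit b P) -> size xs' = mdepth G p ->
    sub G q' = Some (Lit b' P') -> size ws' = mdepth G q' ->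
    (proj G p xs' (addr G q' ws' ++ a) = Some beta <-> [/\ q' = p, restricts ws' xs' & beta = a]).
  by move=> lp sx lq sw; apply: IH => //; [exists b, P | exists b', P'].
case: F litp size_xs litq size_ws => [//|G0 G1|G0 G1|G|G].
1,2: rewrite /=; case: i => [|[|i]] //= litp size_xs; case: q => [|[|[|j]] q] //= litq size_ws;
     rewrite ?prefix0s ?drop0 ?IH' //;
     first [by split=> // [[]] | by split=> [[-> r ->]|[[->] r ->]]].
all: case: i => [|i] litp size_xs; rewrite /= in litp size_xs => //.
all: case: q => [|[|j] q] litq; rewrite /= in litq => // size_ws.
all: case: ws size_ws => [|w ws] // [size_ws]; case: xs size_xs => [|y xs] // [size_xs].
all: rewrite (@proj_modal_addr _ G); last by [left | right].
all: case: eqP => [eq_w|neq_w]; last by split=> [//|[_ [/neq_w]]].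
all: rewrite IH' //; by split=> [[-> r ->]|[[->] [_ r] ->]].
Qed.

Definition bprefix (n : nat) (x : bitstring) : seq bool := [seq x i | i <- iota 0 n].

(* [trunc n xs] cuts every bitstring of [xs] to length [n]: E[trunc n xs] is
   the regular funital restriction of height [n] of the unit E[xs]. *)
Definition trunc (n : nat) (xs : seq bitstring) : seq (seq bool) := map (bprefix n) xs.

Lemma size_bprefix n x : size (bprefix n x) = n.
Proof. by rewrite size_map size_iota. Qed.

Lemma bits_bprefix n x : bits (bprefix n x) = pref x n.
Proof. by rewrite /bits -map_comp. Qed.

Lemma restricts_trunc n xs : restricts (trunc n xs) xs.
Proof. by elim: xs => //= x xs r; rewrite bits_bprefix size_bprefix. Qed.

Lemma restricts_trunc_agree n xs ys : restricts (trunc n xs) ys ->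
  forall j i, i < n -> nth (fun _ => false) xs j i = nth (fun _ => false) ys j i.
Proof.
elim: xs ys => [|x xs IH] [|y ys] //= [eq_xy r] [|j] i lt_in /=; last exact: IH.
have /(congr1 (nth 0 ^~ i)) : pref x n = pref y n by rewrite -bits_bprefix eq_xy size_bprefix.
by rewrite !(nth_map 0) ?size_iota // nth_iota //; case: (x i); case: (y i).
Qed.

Lemma regular_trunc n xs : regular (trunc n xs).
Proof.
case: xs => [//|x xs]; rewrite /regular [head _ _]/= size_bprefix.
by elim: (x :: xs) => //= y ys ->; rewrite size_bprefix eqxx.
Qed.

Lemma height_trunc n x xs : height (trunc n (x :: xs)) = n.
Proof.
rewrite /height /= size_bprefix; apply/eqP; rewrite eqn_leq leq_maxl andbT geq_max leqnn /=.
by elim: xs => //= y ys IH; rewrite size_bprefix geq_max leqnn.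
Qed.

(* The height of a funit is bounded by the length of its address, so only
   finitely many heights occur among the active funits of a position. *)
Lemma height_addr F q ws : is_funit F (q, ws) -> height ws <= size (addr F q ws).
Proof.
elim: q F ws => [|i q IH] F ws [/= occ size_ws].
  by case: ws size_ws => //; case: F occ.
case: F occ size_ws => [b P|G0 G1|G0 G1|G|G] /= occ size_ws; first by case: occ.
1,2: case: i occ size_ws => [|[|i]] //= occ size_ws; do 2 apply: leqW; exact: IH.
all: case: i occ => [|i] //= occ; case: ws size_ws => [|w ws] //= [size_ws].
all: rewrite /height /= -/(height ws) size_cat size_bits geq_max leq_addr /=.
all: rewrite -addSnnS; apply: leq_trans (IH _ _ _) (leq_addl _ _); by split.
Qed.

Lemma least_exceeding_exists F Phi : exists h, least_exceeding F Phi h.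
Proof.
set M := foldr maxn 0 [seq size lm.2 | lm <- Phi].
have size_le_M lm : lm \in Phi -> size lm.2 <= M.
  rewrite {}/M; elim: Phi => //= lm' Phi IH; rewrite in_cons => /orP [/eqP <-|/IH le_lm].
    exact: leq_maxl.
  exact: leq_trans le_lm (leq_maxr _ _).
pose bound h := forall f, active F Phi f -> height f.2 < h.
have bounded : bound M.+1.
  move=> [q ws] [funit_f [lm [in_lm pref_lm]]]; rewrite ltnS /=.
  exact: leq_trans (height_addr funit_f) (leq_trans (size_prefix pref_lm) (size_le_M _ in_lm)).
have [h [[bound_h least_h] _]] :=
  @dec_inh_nat_subset_has_unique_least_element bound (fun h => classic _) (ex_intro _ _ bounded).
by exists h; split => // h' /least_h /leP.
Qed.

Lemma cat_cons_before (T : eqType) (A1 B1 A2 B2 : seq T) x y :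
  A1 ++ x :: B1 = A2 ++ y :: B2 -> size A1 < size A2 -> x \in A2.
Proof.
move=> eq_AB lt_A; have /(congr1 (nth x ^~ (size A1))) := eq_AB.
by rewrite !nth_cat ltnn subnn lt_A /= => ->; apply: mem_nth.
Qed.

Lemma cat_cons_same (T : eqType) (A1 B1 A2 B2 : seq T) x y :
  A1 ++ x :: B1 = A2 ++ y :: B2 -> size A1 = size A2 -> x = y.
Proof.
move=> eq_AB eq_A; have /(congr1 (nth x ^~ (size A1))) := eq_AB.
by rewrite !nth_cat eq_A ltnn subnn.
Qed.

Section FreshNumerals.
Variable F : fml.

Definition fresh_bot_moves (Phi : position) : Prop :=
  forall Phi1 lm Phi2, Phi = Phi1 ++ lm :: Phi2 -> lm.1 = bot ->
  exists g a, is_politeral_funit F g /\ lm.2 = faddr F g ++ dec a /\ ~ made F Phi1 a.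

Lemma fresh_rcons Phi lm : fresh_bot_moves Phi ->
  (lm.1 = bot -> exists g a, is_politeral_funit F g /\ lm.2 = faddr F g ++ dec a /\ ~ made F Phi a) ->
  fresh_bot_moves (rcons Phi lm).
Proof.
move=> fresh_Phi fresh_lm Phi1 lm' Phi2; case/lastP: Phi2 => [|Phi2 lm''].
  by rewrite cats1 => /rcons_inj [<- <-].
by rewrite -rcons_cons -rcons_cat => /rcons_inj [/fresh_Phi].
Qed.

Lemma fresh_cat_top Phi T : fresh_bot_moves Phi -> all (fun lm => lm.1 == top) T ->
  fresh_bot_moves (Phi ++ T).
Proof.
elim: T Phi => [|lm T IH] Phi fresh_Phi /=; first by rewrite cats0.
case/andP => /eqP top_lm top_T; rewrite -cat_rcons; apply: IH => //.
by apply: fresh_rcons => // bot_lm; rewrite bot_lm in top_lm.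
Qed.

Lemma fresh_cat_bot Phi s B : fresh_bot_moves Phi ->
  (forall f, f \in s -> is_politeral_funit F f) -> bot_moves F Phi s B ->
  fresh_bot_moves (Phi ++ B).
Proof.
elim: s Phi B => [|f s IH] Phi B fresh_Phi pol_s /=; first by move=> ->; rewrite cats0.
case=> a [B' [[unmade _] [-> moves_B']]]; rewrite -cat_rcons; apply: IH moves_B'.
  by apply: fresh_rcons => // _; exists f, a; split => //; apply: pol_s; rewrite mem_head.
by move=> g in_g; apply: pol_s; rewrite in_cons in_g orbT.
Qed.

Lemma bot_move_numeral Phi Phi1 m Phi2 p x a :
  fresh_bot_moves Phi -> Phi = Phi1 ++ (bot, m) :: Phi2 ->
  is_politeral_unit F p x -> proj F p x m = Some (dec a) ->
  ~ made F Phi1 a /\ forall Phi', (bot, m) \in Phi' -> made F Phi' a.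
Proof.
move=> fresh_Phi split_Phi [[_ size_x] pol_p] proj_m.
have [[q ws] [a' [pol_g [/= eq_m unmade]]]] := fresh_Phi _ _ _ split_Phi erefl.
have [[occ_q size_ws] pol_q] := pol_g.
move: proj_m; rewrite eq_m /faddr /= => /proj_addr.
case=> // [|_ _ /dec_inj ->]; first exact: dot_notin_dec.
split=> // Phi' in_m; exists (bot, addr F q ws ++ dec a'), (q, ws), (dec a').
by do 3 split=> //; split; [exact: dec_numeral | exact: dec_val].
Qed.

Lemma fresh_numeral_unique Phi p1 x1 p2 x2 m1 m2 a :
  fresh_bot_moves Phi -> is_politeral_unit F p1 x1 -> is_politeral_unit F p2 x2 ->
  (bot, m1) \in Phi -> (bot, m2) \in Phi ->
  proj F p1 x1 m1 = Some (dec a) -> proj F p2 x2 m2 = Some (dec a) -> m1 = m2.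
Proof.
move=> fresh_Phi pol1 pol2 in_m1 in_m2 proj1 proj2.
have [A1 [B1 split1]] : exists A1 B1, Phi = A1 ++ (bot, m1) :: B1.
  by case/splitPr: in_m1 => A1 B1; exists A1, B1.
have [A2 [B2 split2]] : exists A2 B2, Phi = A2 ++ (bot, m2) :: B2.
  by case/splitPr: in_m2 => A2 B2; exists A2, B2.
have [unmade1 made1] := bot_move_numeral fresh_Phi split1 pol1 proj1.
have [unmade2 made2] := bot_move_numeral fresh_Phi split2 pol2 proj2.
have split12 := etrans (esym split1) split2.
case: (ltngtP (size A1) (size A2)) => cmp.
- by case: unmade2; apply: made1; exact: cat_cons_before split12 cmp.
- by case: unmade1; apply: made2; exact: cat_cons_before (esym split12) cmp.
- by case: (cat_cons_same split12 cmp).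
Qed.

End FreshNumerals.

Lemma bot_moves_cover F Phi s B f : bot_moves F Phi s B -> f \in s ->
  exists a, (bot, faddr F f ++ dec a) \in B.
Proof.
elim: s Phi B => [//|g s IH] Phi B [a [B' [_ [-> moves']]]].
rewrite in_cons => /orP [/eqP ->|/(IH _ _ moves') [a' in_a']]; first by exists a; rewrite mem_head.
by exists a'; rewrite in_cons in_a' orbT.
Qed.

Section Run.
Variable F : fml.
Variable pos : nat -> position.
Hypothesis gen : generated F pos.

Lemma pos_mono k k' : k <= k' -> {subset pos k <= pos k'}.
Proof.
move=> /subnK <- lm; elim: (k' - k) => [//|n IH] in_lm.
have [_ /(_ (n + k)) [s [B [T [_ [_ [_ [_ [_ ->]]]]]]]]] := gen.
by rewrite mem_cat IH.
Qed.

Lemma in_run_common lm1 lm2 : in_run pos lm1 -> in_run pos lm2 ->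
  exists k, lm1 \in pos k /\ lm2 \in pos k.
Proof.
move=> [k1 in1] [k2 in2]; exists (maxn k1 k2).
by split; apply: pos_mono (in1) || apply: pos_mono (in2); rewrite ?leq_maxl ?leq_maxr.
Qed.

Lemma fresh_pos k : fresh_bot_moves F (pos k).
Proof.
elim: k => [|k IH].
  by have [-> _] := gen; case.
have [_ /(_ k) [s [B [T [_ [prompts [moves [_ [top_T ->]]]]]]]]] := gen.
rewrite catA; apply: fresh_cat_top (fresh_cat_bot IH _ moves) top_T.
by move=> f /prompts [].
Qed.

Lemma prompt_answered k f : prompt F (pos k) f ->
  exists a, (bot, faddr F f ++ dec a) \in pos k.+1.
Proof.
have [_ /(_ k) [s [B [T [_ [prompts [moves [_ [_ ->]]]]]]]]] := gen.
move=> /prompts /(bot_moves_cover moves) [a in_a].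
by exists a; rewrite !mem_cat in_a orbT.
Qed.

Lemma trunc_prompt k n p x : is_politeral_unit F p x -> least_exceeding F (pos k) n ->
  prompt F (pos k) (p, trunc n x).
Proof.
move=> [[occ size_x] pol] least; split; first by split=> //; split=> //=; rewrite size_map.
split; first exact: regular_trunc.
by case: x {size_x} => [|x xs]; [left | right; rewrite /= height_trunc].
Qed.

(* The least exceeding height at round [k] is at least [k], as long as some
   politeral unit has positive modal depth: each round activates the prompt
   of the previous height. *)
Lemma least_exceeding_grows p x : is_politeral_unit F p x -> x <> [::] ->
  forall k n, least_exceeding F (pos k) n -> k <= n.
Proof.
move=> pol_px nonempty; elim=> [//|k IH] n least_n.
have [h least_h] := least_exceeding_exists F (pos k).
have [a in_a] := prompt_answered (trunc_prompt pol_px least_h).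
have active_trunc : active F (pos k.+1) (p, trunc h x).
  have [[occ size_x] pol] := pol_px.
  split; first by split=> //=; rewrite size_map.
  by exists (bot, faddr F (p, trunc h x) ++ dec a); split=> //=; apply: prefix_prefix.
have := proj1 least_n _ active_trunc.
case: x nonempty {pol_px in_a active_trunc} => [//|x xs] _.
by rewrite /= height_trunc; apply: leq_ltn_trans (IH _ least_h).
Qed.

(* Core step: a bottom move made in a restriction E1[ws] of a unit opposite
   to L is also a move in any other unit opposite to L, which must therefore
   be E1 itself, restricted by [ws] as well. *)
Lemma opposite_bot_move pL xL p1 x1 p2 x2 ws a :
  opposite F pos pL xL p1 x1 -> opposite F pos pL xL p2 x2 ->
  restricts ws x1 -> in_run pos (bot, addr F p1 ws ++ dec a) ->
  p1 = p2 /\ restricts ws x2.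
Proof.
move=> [_ [pol1 [_ opp1]]] [_ [pol2 [_ opp2]]] r1 run_m1.
have [[[_ size_x1] lit1] [[_ size_x2] lit2]] := (pol1, pol2).
have proj_m1 : proj F p1 x1 (addr F p1 ws ++ dec a) = Some (dec a).
  apply/proj_addr => //; [by rewrite (restricts_size r1) | exact: dot_notin_dec].
have [m2 [run_m2 proj_m2]] : in_proj F pos p2 x2 bot (dec a).
  by apply/(opp2 top)/(opp1 top); exists (addr F p1 ws ++ dec a).
have [k [in1 in2]] := in_run_common run_m1 run_m2.
have same_move := fresh_numeral_unique (@fresh_pos k) pol1 pol2 in1 in2 proj_m1 proj_m2.
move: proj_m2; rewrite -same_move.
case/proj_addr=> //; [by rewrite (restricts_size r1) | exact: dot_notin_dec].
Qed.

End Run.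

Theorem lemma7p1 (F0 : fml) (pos : nat -> position) :
  generated F0 pos -> legal F0 pos ->
  forall (pL : seq nat) (xL : seq bitstring),
    is_politeral_unit F0 pL xL ->
    forall (p1 : seq nat) (x1 : seq bitstring) (p2 : seq nat) (x2 : seq bitstring),
      opposite F0 pos pL xL p1 x1 -> opposite F0 pos pL xL p2 x2 ->
      p1 = p2 /\ x1 = x2.
Proof.
move=> gen _ pL xL _ p1 x1 p2 x2 opp1 opp2.
have pol1 : is_politeral_unit F0 p1 x1 by case: opp1 => _ [].
(* At every round, the prompt E1[x1|n] is answered, forcing E1 = E2 and
   x2|n = x1|n. *)
have truncs_agree k n : least_exceeding F0 (pos k) n -> p1 = p2 /\ restricts (trunc n x1) x2.
  move=> least_n; have [a in_a] := prompt_answered gen (trunc_prompt pol1 least_n).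
  by apply: (opposite_bot_move gen opp1 opp2 (restricts_trunc n x1) (a := a)); exists k.+1.
have [n0 least_n0] := least_exceeding_exists F0 (pos 0).
have [<- r0] := truncs_agree _ _ least_n0; split=> //.
have size_x12 : size x1 = size x2 by rewrite -(restricts_size r0) size_map.
have [empty | nonempty] : x1 = [::] \/ x1 <> [::] by case: (x1); [left | right].
  by move: size_x12; rewrite empty; case: (x2).
(* Bit [i] of each component is fixed by the truncation of round [i+1],
   whose height exceeds [i]. *)
apply: (eq_from_nth (x0 := fun _ => false)) => // j _.
apply: functional_extensionality => i.
have [n least_n] := least_exceeding_exists F0 (pos i.+1).
have [_ r] := truncs_agree _ _ least_n.
exact: restricts_trunc_agree r j i (least_exceeding_grows gen pol1 nonempty least_n).
Qed.
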